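(* The space $\mathcal O_2$ is homotopy equivalent to the circle $S^1$.
   Context: A polynomial knot is a map $\phi:\mathbb R\to\mathbb R^3$ with real polynomial components which is a smooth embedding ($\phi$ injective and $\phi'(t)\neq0$ for all $t$). $\mathcal A_2$ is the set of polynomial maps $t\mapsto(a_0,\ b_0+b_1t,\ c_0+c_1t+c_2t^2)$ with $(a_0,b_0,b_1,c_0,c_1,c_2)\in\mathbb R^6$ arbitrary, topologized by identifying it with $\mathbb R^6$ via its coefficient vector. $\mathcal O_2$ is the subspace of $\mathcal A_2$ consisting of polynomial knots. *)

From Stdlib Require Import Reals Lra.
Open Scope R_scope.

(** A "space" is a type together with a distance function; all spaces used
    below are subspaces of Euclidean spaces with the Euclidean distance. *)
Definition continuous_map {A B : Type} (dA : A -> A -> R) (dB : B -> B -> R)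
  (f : A -> B) : Prop :=
  forall (x : A) (eps : R), 0 < eps ->
    exists delta : R, 0 < delta /\
      forall y : A, dA x y < delta -> dB (f x) (f y) < eps.

Definition I01 : Type := { s : R | 0 <= s <= 1 }.

Lemma I01_0_proof : 0 <= 0 <= 1. Proof. lra. Qed.
Lemma I01_1_proof : 0 <= 1 <= 1. Proof. lra. Qed.
Definition I01_0 : I01 := exist _ 0 I01_0_proof.
Definition I01_1 : I01 := exist _ 1 I01_1_proof.

(** Product metric (max metric) on A x [0,1]; it induces the product topology. *)
Definition dprodI {A : Type} (dA : A -> A -> R) (p q : A * I01) : R :=
  Rmax (dA (fst p) (fst q)) (Rabs (proj1_sig (snd p) - proj1_sig (snd q))).

Definition homotopic {A B : Type} (dA : A -> A -> R) (dB : B -> B -> R)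
  (f g : A -> B) : Prop :=
  exists H : A * I01 -> B,
    continuous_map (dprodI dA) dB H /\
    (forall x, H (x, I01_0) = f x) /\
    (forall x, H (x, I01_1) = g x).

Definition homotopy_equivalent {A B : Type} (dA : A -> A -> R) (dB : B -> B -> R)
  : Prop :=
  exists (f : A -> B) (g : B -> A),
    continuous_map dA dB f /\ continuous_map dB dA g /\
    homotopic dA dA (fun x => g (f x)) (fun x => x) /\
    homotopic dB dB (fun y => f (g y)) (fun y => y).

Definition R3 : Type := (R * R * R)%type.
Definition R6 : Type := (R * R * R * R * R * R)%type.

Definition dist6 (u v : R6) : R :=
  let '(u1, u2, u3, u4, u5, u6) := u in
  let '(v1, v2, v3, v4, v5, v6) := v in
  sqrt ((u1 - v1)^2 + (u2 - v2)^2 + (u3 - v3)^2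
        + (u4 - v4)^2 + (u5 - v5)^2 + (u6 - v6)^2).

Definition dist2 (u v : R * R) : R :=
  sqrt ((fst u - fst v)^2 + (snd u - snd v)^2).

Definition dsub {A : Type} (P : A -> Prop) (d : A -> A -> R)
  (x y : { a : A | P a }) : R := d (proj1_sig x) (proj1_sig y).

(** phi : R -> R^3 is a smooth embedding: injective with nowhere vanishing
    derivative (components are differentiable with the given derivatives). *)
Definition is_knot (phi : R -> R3) : Prop :=
  (forall s t : R, phi s = phi t -> s = t) /\
  (forall t : R, exists d1 d2 d3 : R,
      derivable_pt_lim (fun u => fst (fst (phi u))) t d1 /\
      derivable_pt_lim (fun u => snd (fst (phi u))) t d2 /\
      derivable_pt_lim (fun u => snd (phi u)) t d3 /\
      (d1, d2, d3) <> (0, 0, 0)).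

Definition A2map (c : R6) : R -> R3 :=
  let '(a0, b0, b1, c0, c1, c2) := c in
  fun t => (a0, b0 + b1 * t, c0 + c1 * t + c2 * t ^ 2).

(** O_2 as a subspace of A_2 = R^6. *)
Definition O2_pred (c : R6) : Prop := is_knot (A2map c).
Definition O2 : Type := { c : R6 | O2_pred c }.
Definition dO2 : O2 -> O2 -> R := dsub O2_pred dist6.

Definition S1_pred (p : R * R) : Prop := fst p ^ 2 + snd p ^ 2 = 1.
Definition S1 : Type := { p : R * R | S1_pred p }.
Definition dS1 : S1 -> S1 -> R := dsub S1_pred dist2.

From Stdlib Require Import Reals Lra Ranalysis ProofIrrelevance.
From Coquelicot Require Import Coquelicot.
Open Scope R_scope.

(* A map t |-> (a0, b0 + b1 t, c0 + c1 t + c2 t^2) is injective iff b1 <> 0 or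
   (c2 = 0 and c1 <> 0), and then it is automatically an immersion. So O2 is
   the set of coefficient vectors with (b1, c1) <> 0 and, when b1 = 0, c2 = 0.
   The map c |-> (b1, c1) / |(b1, c1)| onto the circle has the section
   p |-> (0, 0, p1, 0, p2, 0), and the deformation that multiplies b1 and c1 by
   s + (1 - s) / |(b1, c1)| > 0 and the other coefficients by s stays inside
   O2 and joins the identity (s = 1) to section o projection (s = 0). *)

Definition continuous_real {A : Type} (d : A -> A -> R) (h : A -> R) : Prop :=
  continuous_map d R_dist h.

Section RealContinuity.

Context {A : Type} (d : A -> A -> R).

Lemma continuous_real_nonexpansive (h : A -> R) :
  (forall x y, R_dist (h x) (h y) <= d x y) -> continuous_real d h.
Proof.
intros Hh x eps Heps; exists eps; split; [exact Heps|].
intros y Hy; specialize (Hh x y); lra.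
Qed.

Lemma continuous_real_const (c : R) : continuous_real d (fun _ => c).
Proof.
intros x eps Heps; exists 1; split; [lra|]; intros y _.
unfold R_dist; rewrite Rminus_eq_0, Rabs_R0; exact Heps.
Qed.

Lemma continuous_real_ext (h1 h2 : A -> R) :
  (forall x, h1 x = h2 x) -> continuous_real d h1 -> continuous_real d h2.
Proof.
intros E Hh x eps Heps; destruct (Hh x eps Heps) as [delta [Hdelta Hy]].
exists delta; split; [exact Hdelta|]; intros y Hxy; rewrite <- !E; auto.
Qed.

Lemma continuous_real_plus (h1 h2 : A -> R) :
  continuous_real d h1 -> continuous_real d h2 ->
  continuous_real d (fun x => h1 x + h2 x).
Proof.
intros H1 H2 x eps Heps.
destruct (H1 x (eps / 2)) as [d1 [Hd1 Hy1]]; [lra|].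
destruct (H2 x (eps / 2)) as [d2 [Hd2 Hy2]]; [lra|].
exists (Rmin d1 d2); split; [apply Rmin_pos; assumption|]; intros y Hxy.
assert (E1 := Hy1 y (Rlt_le_trans _ _ _ Hxy (Rmin_l d1 d2))).
assert (E2 := Hy2 y (Rlt_le_trans _ _ _ Hxy (Rmin_r d1 d2))).
unfold R_dist in *.
replace (h1 x + h2 x - (h1 y + h2 y)) with ((h1 x - h1 y) + (h2 x - h2 y)) by ring.
eapply Rle_lt_trans; [apply Rabs_triang | lra].
Qed.

Lemma continuous_real_comp (h : A -> R) (g : R -> R) :
  continuous_real d h -> (forall x, continuity_pt g (h x)) ->
  continuous_real d (fun x => g (h x)).
Proof.
intros Hh Hg x eps Heps.
destruct (Hg x eps Heps) as [alpha [Halpha Hlim]].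
destruct (Hh x alpha Halpha) as [delta [Hdelta Hy]].
exists delta; split; [exact Hdelta|]; intros y Hxy.
destruct (Req_dec (h x) (h y)) as [E | E].
- rewrite E; unfold R_dist; rewrite Rminus_eq_0, Rabs_R0; exact Heps.
- rewrite R_dist_sym; apply (Hlim (h y)); split.
  + split; [exact I | exact E].
  + rewrite R_dist_sym; apply Hy; exact Hxy.
Qed.

Lemma continuous_real_opp (h : A -> R) :
  continuous_real d h -> continuous_real d (fun x => - h x).
Proof. intros Hh; apply (continuous_real_comp h Ropp); [exact Hh | intros; reg]. Qed.

Lemma continuous_real_minus (h1 h2 : A -> R) :
  continuous_real d h1 -> continuous_real d h2 ->
  continuous_real d (fun x => h1 x - h2 x).
Proof. intros H1 H2; apply continuous_real_plus; [| apply continuous_real_opp]; assumption. Qed.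

(* Polarization: h1 h2 = ((h1 + h2)^2 - (h1 - h2)^2) / 4 reduces products to
   continuity of the unary map y |-> y^2 / 4. *)
Lemma continuous_real_mult (h1 h2 : A -> R) :
  continuous_real d h1 -> continuous_real d h2 ->
  continuous_real d (fun x => h1 x * h2 x).
Proof.
intros H1 H2.
set (quarter_sq := fun y : R => y * y / 4).
apply (continuous_real_ext
  (fun x => quarter_sq (h1 x + h2 x) - quarter_sq (h1 x - h2 x))).
{ intros x; unfold quarter_sq; field. }
assert (Hq : forall h, continuous_real d h -> continuous_real d (fun x => quarter_sq (h x))).
{ intros h Hh; apply continuous_real_comp; [exact Hh | intros; unfold quarter_sq; reg]. }
apply continuous_real_minus; apply Hq;
  [apply continuous_real_plus | apply continuous_real_minus]; assumption.
Qed.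

Lemma continuous_real_sqrt (h : A -> R) :
  continuous_real d h -> (forall x, 0 <= h x) ->
  continuous_real d (fun x => sqrt (h x)).
Proof.
intros Hh Hpos; apply continuous_real_comp; [exact Hh|].
intros x; apply continuity_pt_sqrt, Hpos.
Qed.

Lemma continuous_real_inv (h : A -> R) :
  continuous_real d h -> (forall x, h x <> 0) ->
  continuous_real d (fun x => / h x).
Proof.
intros Hh Hnz; apply (continuous_real_comp h Rinv); [exact Hh|].
intros x; reg; apply Hnz.
Qed.

Lemma continuous_real_sq_diff (h : A -> R) (c : R) :
  continuous_real d h -> continuous_real d (fun x => (c - h x) ^ 2).
Proof. intros Hh; apply (continuous_real_comp h (fun y => (c - y) ^ 2)); [exact Hh | intros; reg]. Qed.

End RealContinuity.

Lemma continuous_map_of_dist {A B : Type} (dA : A -> A -> R) (dB : B -> B -> R)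
  (F : A -> B) :
  (forall b, dB b b = 0) ->
  (forall x, continuous_real dA (fun y => dB (F x) (F y))) ->
  continuous_map dA dB F.
Proof.
intros Hrefl HF x eps Heps.
destruct (HF x x eps Heps) as [delta [Hdelta Hy]].
exists delta; split; [exact Hdelta|]; intros y Hxy.
specialize (Hy y Hxy); unfold R_dist in Hy; rewrite Hrefl in Hy.
rewrite Rabs_minus_sym, Rminus_0_r in Hy.
eapply Rle_lt_trans; [apply Rle_abs | exact Hy].
Qed.

Lemma continuous_map_id {A : Type} (d : A -> A -> R) : continuous_map d d (fun x => x).
Proof. intros x eps Heps; exists eps; split; auto. Qed.

Lemma homotopic_of_eq {A B : Type} (dA : A -> A -> R) (dB : B -> B -> R) (f g : A -> B) :
  continuous_map dA dB g -> (forall x, f x = g x) -> homotopic dA dB f g.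
Proof.
intros Hg Efg; exists (fun p => g (fst p)); repeat split; [| intros x; symmetry; apply Efg].
intros [x s] eps Heps; destruct (Hg x eps Heps) as [delta [Hdelta Hy]].
exists delta; split; [exact Hdelta|]; intros [y t] Hxy; apply Hy.
eapply Rle_lt_trans; [apply Rmax_l | exact Hxy].
Qed.

Definition pr6_1 (u : R6) : R := let '(x, _, _, _, _, _) := u in x.
Definition pr6_2 (u : R6) : R := let '(_, x, _, _, _, _) := u in x.
Definition pr6_3 (u : R6) : R := let '(_, _, x, _, _, _) := u in x.
Definition pr6_4 (u : R6) : R := let '(_, _, _, x, _, _) := u in x.
Definition pr6_5 (u : R6) : R := let '(_, _, _, _, x, _) := u in x.
Definition pr6_6 (u : R6) : R := let '(_, _, _, _, _, x) := u in x.

Lemma dist6_pr u v :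
  dist6 u v = sqrt ((pr6_1 u - pr6_1 v) ^ 2 + (pr6_2 u - pr6_2 v) ^ 2
    + (pr6_3 u - pr6_3 v) ^ 2 + (pr6_4 u - pr6_4 v) ^ 2
    + (pr6_5 u - pr6_5 v) ^ 2 + (pr6_6 u - pr6_6 v) ^ 2).
Proof.
destruct u as [[[[[u1 u2] u3] u4] u5] u6]; destruct v as [[[[[v1 v2] v3] v4] v5] v6].
reflexivity.
Qed.

Lemma R_dist_le_sqrt (a b S : R) : (a - b) ^ 2 <= S -> R_dist a b <= sqrt S.
Proof.
intros HS; unfold R_dist; rewrite <- sqrt_Rsqr_abs.
apply sqrt_le_1_alt; unfold Rsqr; simpl in HS; lra.
Qed.

Ltac pr6_dist6_tac :=
  rewrite dist6_pr; apply R_dist_le_sqrt;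
  repeat match goal with |- context [(?a - ?b) ^ 2] =>
    lazymatch goal with _ : 0 <= (a - b) ^ 2 |- _ => fail | _ => idtac end;
    pose proof (pow2_ge_0 (a - b)) end;
  lra.

Lemma pr6_1_dist6 u v : R_dist (pr6_1 u) (pr6_1 v) <= dist6 u v.
Proof. pr6_dist6_tac. Qed.
Lemma pr6_2_dist6 u v : R_dist (pr6_2 u) (pr6_2 v) <= dist6 u v.
Proof. pr6_dist6_tac. Qed.
Lemma pr6_3_dist6 u v : R_dist (pr6_3 u) (pr6_3 v) <= dist6 u v.
Proof. pr6_dist6_tac. Qed.
Lemma pr6_4_dist6 u v : R_dist (pr6_4 u) (pr6_4 v) <= dist6 u v.
Proof. pr6_dist6_tac. Qed.
Lemma pr6_5_dist6 u v : R_dist (pr6_5 u) (pr6_5 v) <= dist6 u v.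
Proof. pr6_dist6_tac. Qed.
Lemma pr6_6_dist6 u v : R_dist (pr6_6 u) (pr6_6 v) <= dist6 u v.
Proof. pr6_dist6_tac. Qed.

Lemma continuous_real_nonexpansive_comp {A B : Type} (dA : A -> A -> R)
  (dB : B -> B -> R) (F : A -> B) (i : B -> R) :
  (forall u v, R_dist (i u) (i v) <= dB u v) ->
  (forall x y, dB (F x) (F y) <= dA x y) ->
  continuous_real dA (fun x => i (F x)).
Proof.
intros Hi HF; apply continuous_real_nonexpansive.
intros x y; eapply Rle_trans; [apply Hi | apply HF].
Qed.

Lemma continuous_map_R6 {A : Type} (d : A -> A -> R) (F : A -> R6) :
  continuous_real d (fun x => pr6_1 (F x)) -> continuous_real d (fun x => pr6_2 (F x)) ->
  continuous_real d (fun x => pr6_3 (F x)) -> continuous_real d (fun x => pr6_4 (F x)) ->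
  continuous_real d (fun x => pr6_5 (F x)) -> continuous_real d (fun x => pr6_6 (F x)) ->
  continuous_map d dist6 F.
Proof.
intros H1 H2 H3 H4 H5 H6; apply continuous_map_of_dist.
- intros u; rewrite dist6_pr, <- sqrt_0; f_equal; ring.
- intros x; eapply continuous_real_ext; [intros y; symmetry; apply dist6_pr|].
  apply continuous_real_sqrt.
  + repeat apply continuous_real_plus; apply continuous_real_sq_diff; assumption.
  + intros y; repeat apply Rplus_le_le_0_compat; apply pow2_ge_0.
Qed.

Lemma continuous_map_R2 {A : Type} (d : A -> A -> R) (F : A -> R * R) :
  continuous_real d (fun x => fst (F x)) -> continuous_real d (fun x => snd (F x)) ->
  continuous_map d dist2 F.
Proof.
intros H1 H2; apply continuous_map_of_dist.
- intros u; unfold dist2; rewrite <- sqrt_0; f_equal; ring.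
- intros x; apply continuous_real_sqrt.
  + apply continuous_real_plus; apply continuous_real_sq_diff; assumption.
  + intros y; apply Rplus_le_le_0_compat; apply pow2_ge_0.
Qed.

Lemma fst_dist2 u v : R_dist (fst u) (fst v) <= dist2 u v.
Proof. apply R_dist_le_sqrt; pose proof (pow2_ge_0 (snd u - snd v)); lra. Qed.

Lemma snd_dist2 u v : R_dist (snd u) (snd v) <= dist2 u v.
Proof. apply R_dist_le_sqrt; pose proof (pow2_ge_0 (fst u - fst v)); lra. Qed.

Definition knot_coeffs (c : R6) : Prop :=
  let '(_, _, b1, _, c1, c2) := c in b1 <> 0 \/ (c2 = 0 /\ c1 <> 0).

Lemma O2_pred_knot_coeffs c : O2_pred c -> knot_coeffs c.
Proof.
destruct c as [[[[[a0 b0] b1] c0] c1] c2]; unfold O2_pred, is_knot; simpl.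
intros [Hinj _].
destruct (Req_dec b1 0) as [-> | Hb1]; [right | left; exact Hb1].
assert (Hquad : forall s t, c1 * s + c2 * s ^ 2 = c1 * t + c2 * t ^ 2 -> s = t).
{ intros s t E; apply Hinj; simpl; f_equal; [f_equal; ring | lra]. }
destruct (Req_dec c2 0) as [-> | Hc2].
- split; [reflexivity|]; intros ->.
  assert (0 = 1) by (apply Hquad; ring); lra.
- exfalso.
  assert (E : 0 = - c1 / c2) by (apply Hquad; field; exact Hc2).
  assert (c1 = 0) as -> by (apply (Rmult_eq_compat_r c2) in E; field_simplify in E; lra).
  assert (1 = -1) by (apply Hquad; ring); lra.
Qed.

Lemma knot_coeffs_O2_pred c : knot_coeffs c -> O2_pred c.
Proof.
destruct c as [[[[[a0 b0] b1] c0] c1] c2]; unfold O2_pred, is_knot; simpl.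
intros Hc; split.
- intros s t E; injection E as E1 E2.
  destruct Hc as [Hb1 | [-> Hc1]].
  + apply (Rmult_eq_reg_l b1); [lra | exact Hb1].
  + apply (Rmult_eq_reg_l c1); [lra | exact Hc1].
- intros t; exists 0, b1, (c1 + 2 * c2 * t); split; [|split; [|split]].
  + apply derivable_pt_lim_const.
  + apply is_derive_Reals; auto_derive; [exact I | ring].
  + apply is_derive_Reals; auto_derive; [exact I | ring].
  + intros E; injection E as E1 E2.
    destruct Hc as [Hb1 | [-> Hc1]]; [exact (Hb1 E1) | lra].
Qed.

Definition linear_norm (c : R6) : R := sqrt (pr6_3 c ^ 2 + pr6_5 c ^ 2).

Lemma linear_norm_sq c : linear_norm c ^ 2 = pr6_3 c ^ 2 + pr6_5 c ^ 2.
Proof.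
apply pow2_sqrt; apply Rplus_le_le_0_compat; apply pow2_ge_0.
Qed.

Lemma linear_norm_pos c : knot_coeffs c -> 0 < linear_norm c.
Proof.
intros Hc; apply sqrt_lt_R0.
destruct c as [[[[[a0 b0] b1] c0] c1] c2]; simpl in *.
destruct Hc as [Hb1 | [_ Hc1]]; nra.
Qed.

Definition normalize (c : R6) : R * R :=
  (pr6_3 c / linear_norm c, pr6_5 c / linear_norm c).

Lemma normalize_S1 c : knot_coeffs c -> S1_pred (normalize c).
Proof.
intros Hc; pose proof (linear_norm_pos c Hc).
unfold S1_pred, normalize; simpl fst; simpl snd.
replace ((pr6_3 c / linear_norm c) ^ 2 + (pr6_5 c / linear_norm c) ^ 2)
  with ((pr6_3 c ^ 2 + pr6_5 c ^ 2) / linear_norm c ^ 2) by (field; lra).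
rewrite <- linear_norm_sq; field; lra.
Qed.

Definition O2_to_S1 (x : O2) : S1 :=
  exist _ _ (normalize_S1 _ (O2_pred_knot_coeffs _ (proj2_sig x))).

Definition circle_coeffs (p : R * R) : R6 := (0, 0, fst p, 0, snd p, 0).

Lemma circle_coeffs_knot p : S1_pred p -> knot_coeffs (circle_coeffs p).
Proof.
destruct p as [x y]; unfold S1_pred, circle_coeffs; simpl; intros Hp.
destruct (Req_dec x 0) as [-> | Hx]; [right; split; [reflexivity | nra] | left; exact Hx].
Qed.

Definition S1_to_O2 (p : S1) : O2 :=
  exist _ _ (knot_coeffs_O2_pred _ (circle_coeffs_knot _ (proj2_sig p))).

Definition deformation (c : R6) (s : R) : R6 :=
  let k := s + (1 - s) / linear_norm c in
  (s * pr6_1 c, s * pr6_2 c, k * pr6_3 c, s * pr6_4 c, k * pr6_5 c, s * pr6_6 c).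

Lemma deformation_knot c s : knot_coeffs c -> 0 <= s <= 1 -> knot_coeffs (deformation c s).
Proof.
intros Hc Hs.
assert (Hk : 0 < s + (1 - s) / linear_norm c).
{ pose proof (linear_norm_pos c Hc).
  destruct (Req_dec s 1) as [-> | Hs1]; [lra|].
  assert (0 < (1 - s) / linear_norm c) by (apply Rdiv_lt_0_compat; lra); lra. }
revert Hk; unfold deformation; destruct c as [[[[[a0 b0] b1] c0] c1] c2]; simpl in *.
intros Hk; destruct Hc as [Hb1 | [-> Hc1]].
- left; apply Rmult_integral_contrapositive; split; lra.
- right; split; [ring|]; apply Rmult_integral_contrapositive; split; lra.
Qed.

Lemma deformation_0 c : deformation c 0 = circle_coeffs (normalize c).
Proof.
unfold deformation, circle_coeffs, normalize, Rdiv; simpl.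
f_equal; [f_equal; [f_equal; [f_equal; [f_equal|]|]|]|]; ring.
Qed.

Lemma deformation_1 c : deformation c 1 = c.
Proof.
unfold deformation; rewrite Rminus_eq_0; unfold Rdiv; rewrite Rmult_0_l, Rplus_0_r.
destruct c as [[[[[a0 b0] b1] c0] c1] c2]; simpl; rewrite !Rmult_1_l; reflexivity.
Qed.

Definition O2_deformation (p : O2 * I01) : O2 :=
  exist _ _ (knot_coeffs_O2_pred _ (deformation_knot _ _
    (O2_pred_knot_coeffs _ (proj2_sig (fst p))) (proj2_sig (snd p)))).

Lemma O2_eq (x y : O2) : proj1_sig x = proj1_sig y -> x = y.
Proof. apply eq_sig_hprop; intros; apply proof_irrelevance. Qed.

Lemma S1_eq (p q : S1) : proj1_sig p = proj1_sig q -> p = q.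
Proof. apply eq_sig_hprop; intros; apply proof_irrelevance. Qed.

Lemma O2_deformation_0 x : O2_deformation (x, I01_0) = S1_to_O2 (O2_to_S1 x).
Proof. apply O2_eq; apply deformation_0. Qed.

Lemma O2_deformation_1 x : O2_deformation (x, I01_1) = x.
Proof. apply O2_eq; apply deformation_1. Qed.

Lemma O2_to_S1_to_O2 p : O2_to_S1 (S1_to_O2 p) = p.
Proof.
apply S1_eq; destruct p as [[x y] Hp]; unfold S1_pred in Hp; simpl in Hp.
unfold O2_to_S1, S1_to_O2, normalize, linear_norm, circle_coeffs; simpl.
rewrite Hp, sqrt_1; f_equal; field.
Qed.

Lemma continuous_real_inv_linear_norm {A : Type} (d : A -> A -> R) (G : A -> R6) :
  continuous_real d (fun x => pr6_3 (G x)) -> continuous_real d (fun x => pr6_5 (G x)) ->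
  (forall x, knot_coeffs (G x)) -> continuous_real d (fun x => / linear_norm (G x)).
Proof.
intros H3 H5 HG; apply continuous_real_inv.
- apply continuous_real_sqrt.
  + apply continuous_real_plus;
      apply (continuous_real_comp d _ (fun y => y ^ 2)); try assumption; intros; reg.
  + intros x; apply Rplus_le_le_0_compat; apply pow2_ge_0.
- intros x; apply not_eq_sym, Rlt_not_eq, linear_norm_pos, HG.
Qed.

Lemma continuous_real_O2_coord (i : R6 -> R) :
  (forall u v, R_dist (i u) (i v) <= dist6 u v) ->
  continuous_real dO2 (fun x => i (proj1_sig x)).
Proof. intros Hi; apply (continuous_real_nonexpansive_comp _ dist6); [exact Hi | intros; apply Rle_refl]. Qed.

Lemma continuous_real_O2xI_coord (i : R6 -> R) :
  (forall u v, R_dist (i u) (i v) <= dist6 u v) ->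
  continuous_real (dprodI dO2) (fun p => i (proj1_sig (fst p))).
Proof. intros Hi; apply (continuous_real_nonexpansive_comp _ dist6); [exact Hi | intros; apply Rmax_l]. Qed.

Lemma continuous_real_O2xI_time : continuous_real (dprodI dO2) (fun p => proj1_sig (snd p)).
Proof. apply continuous_real_nonexpansive; intros; apply Rmax_r. Qed.

Lemma O2_to_S1_continuous : continuous_map dO2 dS1 O2_to_S1.
Proof.
change (continuous_map dO2 dist2 (fun x => normalize (proj1_sig x))).
assert (Hinv : continuous_real dO2 (fun x => / linear_norm (proj1_sig x))).
{ apply continuous_real_inv_linear_norm;
    [apply continuous_real_O2_coord, pr6_3_dist6 | apply continuous_real_O2_coord, pr6_5_dist6 |].
  intros x; apply O2_pred_knot_coeffs, proj2_sig. }
apply continuous_map_R2; unfold normalize, Rdiv; simpl; apply continuous_real_mult; try exact Hinv;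
  apply continuous_real_O2_coord; [apply pr6_3_dist6 | apply pr6_5_dist6].
Qed.

Lemma S1_to_O2_continuous : continuous_map dS1 dO2 S1_to_O2.
Proof.
change (continuous_map dS1 dist6 (fun p => circle_coeffs (proj1_sig p))).
apply continuous_map_R6; unfold circle_coeffs; simpl; try apply continuous_real_const;
  apply (continuous_real_nonexpansive_comp _ dist2); try (intros; apply Rle_refl);
  [apply fst_dist2 | apply snd_dist2].
Qed.

Lemma O2_deformation_continuous : continuous_map (dprodI dO2) dO2 O2_deformation.
Proof.
change (continuous_map (dprodI dO2) dist6
  (fun p => deformation (proj1_sig (fst p)) (proj1_sig (snd p)))).
assert (Hscale : continuous_real (dprodI dO2) (fun p =>
  proj1_sig (snd p) + (1 - proj1_sig (snd p)) / linear_norm (proj1_sig (fst p)))).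
{ apply continuous_real_plus; [apply continuous_real_O2xI_time|].
  apply continuous_real_mult.
  - apply continuous_real_minus; [apply continuous_real_const | apply continuous_real_O2xI_time].
  - apply continuous_real_inv_linear_norm;
      [apply continuous_real_O2xI_coord, pr6_3_dist6 | apply continuous_real_O2xI_coord, pr6_5_dist6 |].
    intros p; apply O2_pred_knot_coeffs, proj2_sig. }
apply continuous_map_R6; unfold deformation; simpl; apply continuous_real_mult;
  try apply Hscale; try apply continuous_real_O2xI_time;
  apply continuous_real_O2xI_coord;
  first [apply pr6_1_dist6 | apply pr6_2_dist6 | apply pr6_3_dist6
        | apply pr6_4_dist6 | apply pr6_5_dist6 | apply pr6_6_dist6].
Qed.

Theorem mainTheorem3 : @homotopy_equivalent O2 S1 dO2 dS1.
Proof.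
exists O2_to_S1, S1_to_O2.
split; [exact O2_to_S1_continuous|].
split; [exact S1_to_O2_continuous|].
split.
- exists O2_deformation; split; [exact O2_deformation_continuous|].
  split; [exact O2_deformation_0 | exact O2_deformation_1].
- apply homotopic_of_eq; [apply continuous_map_id | exact O2_to_S1_to_O2].
Qed.
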